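(* For every even $n\ge 2$ and every integer $1\le k\le\frac n2$, $$\sum_{j=0}^{k}\frac{q^{(n-1)j-1}-1}{q-1}\binom{n/2}{j}_{q^2}q^{2(k-j)^2-(k-j)}\frac{(q^{n+2-4k+2j};q^2)_{2k-2j}}{(q;q)_{2k-2j}}=\frac{q^{2k^2-k-1}-1}{q-1}\binom{n}{2k}_q$$ as an identity of rational functions in $q$.
   Context: $(x;t)_m=\prod_{j=0}^{m-1}(1-xt^j)$ and $\binom{c}{d}_t=\prod_{j=0}^{d-1}\frac{1-t^{c-j}}{1-t^{j+1}}$. *)

From mathcomp Require Import all_boot all_order all_algebra.
From mathcomp Require Import fraction.
Set Implicit Arguments. Unset Strict Implicit. Unset Printing Implicit Defensive.
Import Order.TTheory GRing.Theory Num.Theory.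
Local Open Scope ring_scope.

Definition qpoch (F : fieldType) (x t : F) (m : nat) : F :=
  \prod_(j < m) (1 - x * t ^+ j).

Definition qbinom (F : fieldType) (t : F) (c d : nat) : F :=
  \prod_(j < d) ((1 - t ^ (c%:Z - j%:Z)) / (1 - t ^+ j.+1)).

Definition ratfun := {fraction {poly rat}}.
Definition qvar : ratfun := @FracField.tofrac _ ('X : {poly rat}).

From mathcomp Require Import all_boot all_order all_algebra.
From mathcomp Require Import fraction.
From mathcomp Require Import ring zify.
Import GRing.Theory Num.Theory.
Local Open Scope ring_scope.

Set Implicit Arguments.
Unset Strict Implicit.
Unset Printing Implicit Defensive.

(* Write n = 2(k + a), Q = q^2, and s_j for the j-th summand stripped of its factor
   (q^((n-1)j-1) - 1)/(q - 1).  The identity combines the two evaluations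
     sum_j s_j = [n, 2k]_q   and   sum_j q^((n-1)j) s_j = q^(2k^2-k) [n, 2k]_q.
   Reindexing by r = k - j and putting x = q Q^a, s_(k-r) is [n, 2k]_q / (x;Q)_k times
   the r-th term of the expansion
     (x;Q)_k = sum_r [k, r]_Q Q^C(r,2) prod_(i<r) (c Q^i - x) (c Q^r;Q)_(k-r)
   at c = q (for r > a both vanish).  This expansion, and its companion with weights
   Q^((k-1)(k-r)) x^(k-r) summing to c^k Q^(k(k-1)) (x;Q)_k, hold for every c and follow
   by induction on k from the two q-Pascal rules. *)

Section QPochhammer.
Variable F : fieldType.
Implicit Types x t : F.

Lemma qpochS x t m : qpoch x t m.+1 = qpoch x t m * (1 - x * t ^+ m).
Proof. by rewrite /qpoch big_ord_recr. Qed.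

Lemma qpochD x t m l :
  qpoch x t (m + l) = qpoch x t m * qpoch (x * t ^+ m) t l.
Proof.
rewrite /qpoch big_split_ord; congr (_ * _).
by apply: eq_bigr => i _; rewrite exprD mulrA.
Qed.

Lemma qpoch_shiftE x t m l : qpoch x t m != 0 ->
  qpoch (x * t ^+ m) t l = qpoch x t (m + l) / qpoch x t m.
Proof. by move=> nz; rewrite qpochD [qpoch x t m * _]mulrC mulfK. Qed.

Lemma qpoch_eq0 x t m i : (i < m)%N -> x * t ^+ i = 1 -> qpoch x t m = 0.
Proof.
by move=> lt_im xti; rewrite /qpoch (bigD1 (Ordinal lt_im)) //= xti subrr mul0r.
Qed.

Lemma qpoch_selfS t m : qpoch t t m.+1 = qpoch t t m * (1 - t ^+ m.+1).
Proof. by rewrite qpochS exprS. Qed.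

Lemma qpoch_double t m :
  qpoch t t (2 * m) = qpoch t (t ^+ 2) m * qpoch (t ^+ 2) (t ^+ 2) m.
Proof.
elim: m => [|m IHm]; first by rewrite /qpoch !big_ord0 mulr1.
rewrite mulnS add2n !qpoch_selfS !qpochS IHm -!exprM mulnS add2n !exprS.
ring.
Qed.

End QPochhammer.

Section GaussianBinomial.
Variables (F : fieldType) (t : F).

Definition gbinom k r := \prod_(i < r) ((1 - t ^+ (k - i)) / (1 - t ^+ i.+1)).

Lemma gbinom0 k : gbinom k 0 = 1.
Proof. by rewrite /gbinom big_ord0. Qed.

Lemma gbinom_recr k r :
  gbinom k r.+1 = gbinom k r * ((1 - t ^+ (k - r)) / (1 - t ^+ r.+1)).
Proof. by rewrite /gbinom big_ord_recr. Qed.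

Lemma gbinom_eq0 k r : (k < r)%N -> gbinom k r = 0.
Proof.
by move=> lt_kr; rewrite /gbinom (bigD1 (Ordinal lt_kr)) //= subnn subrr !mul0r.
Qed.

Lemma gbinomSS k r :
  gbinom k.+1 r.+1 = gbinom k r * ((1 - t ^+ k.+1) / (1 - t ^+ r.+1)).
Proof.
elim: r => [|r IHr]; first by rewrite gbinom_recr !gbinom0 subn0.
by rewrite gbinom_recr IHr gbinom_recr subSS; ring.
Qed.

Hypothesis t_nonroot : forall i, 1 - t ^+ i.+1 != 0.

Lemma gbinom_pascal k r :
  gbinom k.+1 r.+1 = gbinom k r.+1 + t ^+ (k - r) * gbinom k r.
Proof.
have [lt_kr|le_rk] := ltnP k r.
  by rewrite !gbinom_eq0 ?mulr0 ?addr0 // ltnS ltnW.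
have tkE : t ^+ k.+1 = t ^+ (k - r) * t ^+ r.+1 by rewrite -exprD addnS subnK.
by rewrite gbinomSS gbinom_recr tkE; field; apply: t_nonroot.
Qed.

Lemma gbinom_pascal_dual k r :
  gbinom k.+1 r.+1 = t ^+ r.+1 * gbinom k r.+1 + gbinom k r.
Proof.
have [lt_kr|le_rk] := ltnP k r.
  by rewrite !gbinom_eq0 ?mulr0 ?add0r // ltnS ltnW.
have tkE : t ^+ k.+1 = t ^+ r.+1 * t ^+ (k - r) by rewrite -exprD addSn subnKC.
by rewrite gbinomSS gbinom_recr tkE; field; apply: t_nonroot.
Qed.

Lemma sum_gbinom_widen k (f : nat -> F) :
  \sum_(r < k.+2) gbinom k r * f r = \sum_(r < k.+1) gbinom k r * f r.
Proof. by rewrite big_ord_recr /= gbinom_eq0 // mul0r addr0. Qed.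

Lemma sum_gbinomS k (f : nat -> F) :
  \sum_(r < k.+2) gbinom k.+1 r * f r
  = \sum_(r < k.+1) gbinom k r * f r
    + \sum_(r < k.+1) t ^+ (k - r) * gbinom k r * f r.+1.
Proof.
rewrite -[X in _ = X + _]sum_gbinom_widen big_ord_recl [X in _ = X + _]big_ord_recl.
rewrite !gbinom0 -addrA; congr (_ + _); rewrite /= -big_split /=.
by apply: eq_bigr => r _; rewrite gbinom_pascal; ring.
Qed.

Lemma sum_gbinomS_dual k (f : nat -> F) :
  \sum_(r < k.+2) gbinom k.+1 r * f r
  = \sum_(r < k.+1) t ^+ r * gbinom k r * f r
    + \sum_(r < k.+1) gbinom k r * f r.+1.
Proof.
have -> : \sum_(r < k.+1) t ^+ r * gbinom k r * f r
          = \sum_(r < k.+2) t ^+ r * gbinom k r * f r.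
  by rewrite [RHS]big_ord_recr /= gbinom_eq0 // mulr0 mul0r addr0.
rewrite big_ord_recl [X in _ = X + _]big_ord_recl !gbinom0 expr0 !mul1r -addrA.
congr (_ + _); rewrite /= -big_split /=.
by apply: eq_bigr => r _; rewrite gbinom_pascal_dual; ring.
Qed.

Lemma qpoch_self_neq0 m : qpoch t t m != 0.
Proof. by apply/prodf_neq0 => i _; rewrite -exprS. Qed.

Lemma gbinomE k r : (r <= k)%N ->
  gbinom k r = qpoch t t k / (qpoch t t r * qpoch t t (k - r)).
Proof.
elim: r => [|r IHr] le_rk.
  by rewrite gbinom0 subn0 /qpoch big_ord0 mul1r divff // qpoch_self_neq0.
have kE : (k - r = (k - r.+1).+1)%N by rewrite subnSK.
rewrite gbinom_recr IHr 1?ltnW // kE !qpoch_selfS -kE.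
by field; rewrite !qpoch_self_neq0 kE !t_nonroot.
Qed.

End GaussianBinomial.

Lemma qbinom_gbinom (F : fieldType) (t : F) c d : (d <= c)%N ->
  qbinom t c d = gbinom t c d.
Proof.
move=> le_dc; apply: eq_bigr => i _.
by rewrite subzn -?exprnP // (leq_trans (ltnW (ltn_ord i))).
Qed.

Section QExpansion.
Variables (F : fieldType) (Q : F).

Definition qfall x c r := Q ^+ 'C(r, 2) * \prod_(i < r) (c * Q ^+ i - x).

Lemma qfallS x c r : qfall x c r.+1 = Q ^+ r * (c - x) * qfall x (c * Q) r.
Proof.
rewrite /qfall big_ord_recl /= expr0 mulr1 binS bin1 exprD.
under [X in _ * (_ * X)]eq_bigr => i _ do rewrite /bump /= add1n exprS mulrA.
ring.
Qed.

Lemma qfall_eq0 c a r : (a < r)%N -> qfall (c * Q ^+ a) c r = 0.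
Proof. by move=> lt_ar; rewrite /qfall (bigD1 (Ordinal lt_ar)) //= subrr mul0r mulr0. Qed.

Lemma qfall_qpoch c a r : (r <= a)%N ->
  qfall (c * Q ^+ a) c r * qpoch Q Q (a - r)
  = c ^+ r * Q ^+ ('C(r, 2) * 2) * qpoch Q Q a.
Proof.
elim: r => [|r IHr] le_ra; first by rewrite /qfall big_ord0 subn0 bin0n !expr0; ring.
have aE : (a - r = (a - r.+1).+1)%N by rewrite subnSK.
have QaE : Q ^+ a = Q ^+ r * Q ^+ (a - r) by rewrite -exprD subnKC // ltnW.
have factor : c * Q ^+ r - c * Q ^+ a = c * Q ^+ r * (1 - Q ^+ (a - r)).
  by rewrite QaE; ring.
transitivity (c * Q ^+ r * Q ^+ r * (c ^+ r * Q ^+ ('C(r, 2) * 2) * qpoch Q Q a)).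
  rewrite -IHr 1?ltnW // /qfall big_ord_recr /= binS bin1 factor aE qpoch_selfS.
  by rewrite -aE exprD; ring.
by rewrite binS bin1 mulnDl [(r * 2)%N]muln2 -addnn !exprD exprS; ring.
Qed.

Definition expansion_term x c k r := qfall x c r * qpoch (c * Q ^+ r) Q (k - r).

Lemma expansion_term_recr x c k r : (r <= k)%N ->
  expansion_term x c k.+1 r = expansion_term x c k r * (1 - c * Q ^+ k).
Proof.
by move=> le_rk; rewrite /expansion_term subSn // qpochS -!mulrA -exprD subnKC.
Qed.

Lemma expansion_termSS x c k r :
  expansion_term x c k.+1 r.+1 = Q ^+ r * (c - x) * expansion_term x (c * Q) k r.
Proof.
by rewrite /expansion_term qfallS subSS exprS [c * (Q * _)]mulrA -!mulrA.
Qed.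

Hypothesis Q_nonroot : forall i, 1 - Q ^+ i.+1 != 0.

Lemma qpoch_expansion x c k :
  qpoch x Q k = \sum_(r < k.+1) gbinom Q k r * expansion_term x c k r.
Proof.
elim: k c => [|k IHk] c.
  by rewrite big_ord1 gbinom0 /expansion_term /qfall /qpoch !big_ord0 !mulr1.
rewrite sum_gbinomS //.
have lower : \sum_(r < k.+1) gbinom Q k r * expansion_term x c k.+1 r
             = (1 - c * Q ^+ k) * qpoch x Q k.
  rewrite (IHk c) mulr_sumr; apply: eq_bigr => r _.
  by rewrite expansion_term_recr ?leq_ord //; ring.
have upper : \sum_(r < k.+1) Q ^+ (k - r) * gbinom Q k r * expansion_term x c k.+1 r.+1
             = Q ^+ k * (c - x) * qpoch x Q k.
  rewrite (IHk (c * Q)) mulr_sumr; apply: eq_bigr => r _.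
  have QkE : Q ^+ k = Q ^+ (k - r) * Q ^+ r by rewrite -exprD subnK ?leq_ord.
  by rewrite expansion_termSS QkE; ring.
by rewrite lower upper qpochS; ring.
Qed.

Lemma qpoch_expansion_weighted x c k :
  \sum_(r < k.+1) gbinom Q k r * expansion_term x c k r
                  * (Q ^+ (k.-1 * (k - r)) * x ^+ (k - r))
  = c ^+ k * Q ^+ (k * k.-1) * qpoch x Q k.
Proof.
elim: k c => [|k IHk] c.
  by rewrite big_ord1 gbinom0 /expansion_term /qfall /qpoch !big_ord0; ring.
pose f r := expansion_term x c k.+1 r * (Q ^+ (k * (k.+1 - r)) * x ^+ (k.+1 - r)).
rewrite (eq_bigr (fun r : 'I_k.+2 => gbinom Q k.+1 r * f r)) => [|r _]; last by rewrite /f; ring.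
rewrite sum_gbinomS_dual // /f.
have lower : \sum_(r < k.+1) Q ^+ r * gbinom Q k r * (expansion_term x c k.+1 r
                                  * (Q ^+ (k * (k.+1 - r)) * x ^+ (k.+1 - r)))
             = (1 - c * Q ^+ k) * (Q ^+ k * Q ^+ k) * x
               * (c ^+ k * Q ^+ (k * k.-1) * qpoch x Q k).
  rewrite -(IHk c) mulr_sumr; apply: eq_bigr => r _.
  have le_rk := leq_ord r.
  have QE : Q ^+ r * Q ^+ (k * (k - r).+1) = Q ^+ k * Q ^+ k * Q ^+ (k.-1 * (k - r)).
    by rewrite -!exprD; congr (_ ^+ _); nia.
  rewrite expansion_term_recr // subSn // [x ^+ _.+1]exprS.
  transitivity (Q ^+ r * Q ^+ (k * (k - r).+1) * gbinom Q k r * expansion_term x c k r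
                * (1 - c * Q ^+ k) * x * x ^+ (k - r)); first by ring.
  by rewrite QE; ring.
have upper : \sum_(r < k.+1) gbinom Q k r * (expansion_term x c k.+1 r.+1
                                  * (Q ^+ (k * (k.+1 - r.+1)) * x ^+ (k.+1 - r.+1)))
             = Q ^+ k * (c - x) * ((c * Q) ^+ k * Q ^+ (k * k.-1) * qpoch x Q k).
  rewrite -(IHk (c * Q)) mulr_sumr; apply: eq_bigr => r _.
  have QE : Q ^+ r * Q ^+ (k * (k - r)) = Q ^+ k * Q ^+ (k.-1 * (k - r)).
    by rewrite -!exprD; congr (_ ^+ _); have := leq_ord r; nia.
  rewrite expansion_termSS !subSS.
  transitivity (Q ^+ r * Q ^+ (k * (k - r)) * (c - x) * gbinom Q k r
                * expansion_term x (c * Q) k r * x ^+ (k - r)); first by ring.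
  by rewrite QE; ring.
have QkE : Q ^+ (k.+1 * k) = Q ^+ (k * k.-1) * Q ^+ k * Q ^+ k.
  by rewrite -!exprD; congr (_ ^+ _); case: k {f IHk lower upper} => //= k; nia.
by rewrite lower upper qpochS QkE exprMn [c ^+ k.+1]exprS; ring.
Qed.

End QExpansion.

Lemma bin2_mul2 r : ('C(r, 2) * 2 = r * r.-1)%N.
Proof.
elim: r => // r IHr; rewrite binS bin1 mulnDl IHr.
by case: r {IHr} => //= r; nia.
Qed.

Section Summand.
Variables (F : fieldType) (q : F).
Hypotheses (q_neq0 : q != 0) (q_nonroot : forall i, 1 - q ^+ i.+1 != 0).

Local Notation Q := (q ^+ 2).

Lemma sqr_nonroot i : 1 - Q ^+ i.+1 != 0.
Proof. by rewrite -exprM mulnS addSn; apply: q_nonroot. Qed.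

Lemma qpoch_shift_neq0 a m : qpoch (q * Q ^+ a) Q m != 0.
Proof.
by apply/prodf_neq0 => i _; rewrite -mulrA -exprD -exprM -exprS; apply: q_nonroot.
Qed.

Lemma qpoch_sqr_neq0 m : qpoch q Q m != 0.
Proof. by have := qpoch_shift_neq0 0 m; rewrite expr0 mulr1. Qed.

Definition summand n k j :=
  qbinom Q (n %/ 2) j
  * q ^ (2 * (k%:Z - j%:Z) ^+ 2 - (k%:Z - j%:Z))
  * qpoch (q ^ (n%:Z + 2 - 4 * k%:Z + 2 * j%:Z)) Q (2 * k - 2 * j)
  / qpoch q q (2 * k - 2 * j).

Lemma summand_eq0 k a r : (r <= k)%N -> (a < r)%N ->
  summand (2 * (k + a)) k (k - r) = 0.
Proof.
move=> le_rk lt_ar; rewrite /summand.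
suff -> : qpoch (q ^ ((2 * (k + a))%N%:Z + 2 - 4 * k%:Z + 2 * (k - r)%N%:Z)) Q
            (2 * k - 2 * (k - r)) = 0 by rewrite mulr0 mul0r.
apply: (@qpoch_eq0 _ _ _ _ (r - a - 1)); first by lia.
rewrite -exprM exprnP -expfzDr //.
have -> : (2 * (k + a))%N%:Z + 2 - 4 * k%:Z + 2 * (k - r)%N%:Z + (2 * (r - a - 1))%N%:Z = 0.
  by lia.
by rewrite expr0z.
Qed.

Lemma summandE k a r : (r <= k)%N -> (r <= a)%N ->
  summand (2 * (k + a)) k (k - r)
  = qpoch Q Q (k + a) * q ^+ r * Q ^+ ('C(r, 2) * 2)
    / (qpoch Q Q (k - r) * qpoch Q Q (a - r) * qpoch q Q r * qpoch Q Q r).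
Proof.
move=> le_rk le_ra.
have powE : q ^ (2 * (k%:Z - (k - r)%N%:Z) ^+ 2 - (k%:Z - (k - r)%N%:Z))
            = q ^+ r * Q ^+ ('C(r, 2) * 2).
  rewrite bin2_mul2 -exprM -exprD [RHS]exprnP; apply: (congr1 (exprz q)).
  by case: r le_rk le_ra => [|r] *; rewrite expr2 /=; nia.
have baseE : q ^ ((2 * (k + a))%N%:Z + 2 - 4 * k%:Z + 2 * (k - r)%N%:Z)
             = Q * Q ^+ (a - r).
  by rewrite -exprS -exprM [RHS]exprnP; apply: (congr1 (exprz q)); lia.
have lenE : (2 * k - 2 * (k - r) = 2 * r)%N by lia.
rewrite /summand mulKn // powE baseE lenE qpoch_shiftE ?(qpoch_self_neq0 sqr_nonroot) //.
have le_k_ka : (k - r <= k + a)%N by lia.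
rewrite qbinom_gbinom // (gbinomE sqr_nonroot) //.
have -> : (k + a - (k - r) = a - r + 2 * r)%N by lia.
rewrite qpoch_double.
by field; rewrite !(qpoch_self_neq0 sqr_nonroot) !qpoch_sqr_neq0.
Qed.

Lemma summand_expansion k a r : (r <= k)%N ->
  summand (2 * (k + a)) k (k - r)
  = qbinom q (2 * (k + a)) (2 * k) / qpoch (q * Q ^+ a) Q k
    * (gbinom Q k r * expansion_term Q (q * Q ^+ a) q k r).
Proof.
move=> le_rk; rewrite /expansion_term; have [lt_ar|le_ra] := ltnP a r.
  by rewrite summand_eq0 // qfall_eq0 // !(mul0r, mulr0).
have qfallE : qfall Q (q * Q ^+ a) q r
              = q ^+ r * Q ^+ ('C(r, 2) * 2) * qpoch Q Q a / qpoch Q Q (a - r).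
  by rewrite -qfall_qpoch // mulfK // (qpoch_self_neq0 sqr_nonroot).
have le_2k : (2 * k <= 2 * (k + a))%N by lia.
rewrite summandE // qbinom_gbinom // (gbinomE q_nonroot) // (gbinomE sqr_nonroot) //.
rewrite qfallE !qpoch_shiftE ?qpoch_sqr_neq0 // subnKC //.
have -> : (2 * (k + a) - 2 * k = 2 * a)%N by lia.
rewrite !qpoch_double [(a + k)%N]addnC.
by field; rewrite !(qpoch_self_neq0 sqr_nonroot) !qpoch_sqr_neq0.
Qed.

Lemma sum_summand k a :
  \sum_(j < k.+1) summand (2 * (k + a)) k j = qbinom q (2 * (k + a)) (2 * k).
Proof.
rewrite (reindex_inj rev_ord_inj) /=.
under eq_bigr => r _ do rewrite subSS (summand_expansion a (leq_ord r)).
by rewrite -mulr_sumr -(qpoch_expansion sqr_nonroot) mulfVK ?qpoch_shift_neq0.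
Qed.

Lemma sum_weighted_summand k a :
  \sum_(j < k.+1) q ^+ ((2 * (k + a) - 1) * j) * summand (2 * (k + a)) k j
  = q ^+ (2 * k * k - k) * qbinom q (2 * (k + a)) (2 * k).
Proof.
have weightE r : (r <= k)%N ->
  q ^+ ((2 * (k + a) - 1) * (k - r)) = Q ^+ (k.-1 * (k - r)) * (q * Q ^+ a) ^+ (k - r).
  move=> le_rk; rewrite exprMn -!exprM -exprS -exprM -!exprD; congr (_ ^+ _).
  by case: k le_rk => [|k] le_rk /=; nia.
rewrite (reindex_inj rev_ord_inj) /=.
transitivity (qbinom q (2 * (k + a)) (2 * k) / qpoch (q * Q ^+ a) Q k
  * \sum_(r < k.+1) gbinom Q k r * expansion_term Q (q * Q ^+ a) q k r
                    * (Q ^+ (k.-1 * (k - r)) * (q * Q ^+ a) ^+ (k - r))).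
  rewrite mulr_sumr; apply: eq_bigr => r _.
  by rewrite subSS summand_expansion ?leq_ord // weightE ?leq_ord //; ring.
rewrite (qpoch_expansion_weighted sqr_nonroot).
have qkE : q ^+ k * Q ^+ (k * k.-1) = q ^+ (2 * k * k - k).
  by rewrite -exprM -exprD; congr (_ ^+ _); case: k {weightE} => //= k; nia.
by rewrite mulrA mulrAC mulfVK ?qpoch_shift_neq0 // qkE mulrC.
Qed.
End Summand.

Lemma qvar_neq0 : qvar != 0.
Proof. by rewrite /qvar tofrac_eq0 polyX_eq0. Qed.

Lemma qvar_nonroot i : 1 - qvar ^+ i.+1 != 0.
Proof.
rewrite /qvar -tofracXn -tofrac1 -tofracB tofrac_eq0 subr_eq0 eq_sym.
apply/eqP => /(congr1 (fun p : {poly rat} => size p)).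
by rewrite size_polyXn size_poly1.
Qed.

Theorem mainTheorem10 (n k : nat) :
  ~~ odd n -> (2 <= n)%N -> (1 <= k)%N -> (k <= n %/ 2)%N ->
  \sum_(j < k.+1)
     ((qvar ^ ((n%:Z - 1) * j%:Z - 1) - 1) / (qvar - 1)
      * qbinom (qvar ^+ 2) (n %/ 2) j
      * qvar ^ (2 * (k%:Z - j%:Z) ^+ 2 - (k%:Z - j%:Z))
      * qpoch (qvar ^ (n%:Z + 2 - 4 * k%:Z + 2 * j%:Z)) (qvar ^+ 2) (2 * k - 2 * j)
      / qpoch qvar qvar (2 * k - 2 * j))
  = (qvar ^ (2 * k%:Z ^+ 2 - k%:Z - 1) - 1) / (qvar - 1) * qbinom qvar n (2 * k).
Proof.
move=> n_even n_ge2 _ le_k_half.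
have [a n_eq] : exists a, n = (2 * (k + a))%N by exists (n %/ 2 - k)%N; lia.
subst n.
have powE (e : nat) : qvar ^ (e%:Z - 1) = qvar^-1 * qvar ^+ e.
  by rewrite expfzDr ?qvar_neq0 // exprN1 -exprnP mulrC.
have weightE (j : nat) :
    ((2 * (k + a))%N%:Z - 1) * j%:Z = ((2 * (k + a) - 1) * j)%N%:Z.
  by rewrite subzn ?PoszM //; lia.
transitivity (\sum_(j < k.+1) (qvar^-1 * qvar ^+ ((2 * (k + a) - 1) * j) - 1) / (qvar - 1)
                              * summand qvar (2 * (k + a)) k j).
  by apply: eq_bigr => j _; rewrite weightE powE /summand !mulrA.
transitivity ((qvar^-1 * \sum_(j < k.+1) qvar ^+ ((2 * (k + a) - 1) * j)
                         * summand qvar (2 * (k + a)) k j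
               - \sum_(j < k.+1) summand qvar (2 * (k + a)) k j) / (qvar - 1)).
  by rewrite mulr_sumr -sumrB mulr_suml; apply: eq_bigr => j _; ring.
rewrite (sum_weighted_summand qvar_neq0 qvar_nonroot) (sum_summand qvar_neq0 qvar_nonroot).
have -> : 2 * k%:Z ^+ 2 - k%:Z - 1 = (2 * k * k - k)%N%:Z - 1 by rewrite expr2; nia.
by rewrite powE; ring.
Qed.
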